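(* Let $f:[0,1]\to\mathbb{R}$ be $\alpha$-Hölder for some $\alpha>\frac12$ (i.e. $|f(x)-f(y)|\le C|x-y|^\alpha$ for all $x,y$) and have no finite one-sided derivative at any point, and let $F$ be real-analytic on an open interval containing $f([0,1])$. Then $F\circ f$ has a finite one-sided derivative at a point $x_0$ if and only if $F\circ f$ is differentiable at $x_0$ with derivative $0$. *)

From Stdlib Require Import Reals Lra.
From Coquelicot Require Import Coquelicot.
Open Scope R_scope.

Definition holder_on01 (f : R -> R) (alpha : R) : Prop :=
  exists C : R, forall x y : R, 0 <= x <= 1 -> 0 <= y <= 1 -> x <> y ->
    Rabs (f x - f y) <= C * Rpower (Rabs (x - y)) alpha.

Definition diff_quot (g : R -> R) (x0 : R) : R -> R :=
  fun x => (g x - g x0) / (x - x0).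

Definition has_right_deriv01 (g : R -> R) (x0 l : R) : Prop :=
  0 <= x0 < 1 /\ filterlim (diff_quot g x0) (at_right x0) (locally l).

Definition has_left_deriv01 (g : R -> R) (x0 l : R) : Prop :=
  0 < x0 <= 1 /\ filterlim (diff_quot g x0) (at_left x0) (locally l).

Definition has_finite_onesided_deriv01 (g : R -> R) (x0 : R) : Prop :=
  exists l : R, has_right_deriv01 g x0 l \/ has_left_deriv01 g x0 l.

(* g : [0,1] -> R is differentiable at x0 with derivative l
   (limit taken within [0,1], i.e. one-sided at the endpoints) *)
Definition has_deriv01 (g : R -> R) (x0 l : R) : Prop :=
  filterlim (diff_quot g x0)
    (within (fun x => 0 <= x <= 1 /\ x <> x0) (locally x0)) (locally l).

Definition analytic_at (F : R -> R) (c : R) : Prop :=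
  exists (r : R) (a : nat -> R), 0 < r /\
    forall x : R, Rabs (x - c) < r -> is_pseries a (x - c) (F x).

Definition analytic_on_interval (F : R -> R) (a b : R) : Prop :=
  forall c : R, a < c < b -> analytic_at F c.

From Stdlib Require Import Reals Lra.
From Coquelicot Require Import Coquelicot.
Open Scope R_scope.

(* Fix x0 in [0,1] and put y0 = f x0.  Analyticity of F at y0 gives
   a second-order expansion  F y = F y0 + a1 (y - y0) + O((y - y0)^2).
   - If a1 = 0, then |F (f x) - F y0| <= K C^2 |x - x0|^(2 alpha), and since
     2 alpha > 1 the difference quotient of F o f tends to 0 at x0: F o f is
     differentiable at x0 with derivative 0.
   - If a1 <> 0, the slope (F y - F y0) / (y - y0) tends to a1 as y -> y0, so
     dividing the difference quotient of F o f by the slope at f x shows that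
     any one-sided derivative l of F o f at x0 yields the one-sided derivative
     l / a1 of f at x0, which is excluded by hypothesis. *)

Lemma ball_Rabs (x e y : R) : ball x e y <-> Rabs (y - x) < e.
Proof. split; intros H; exact H. Qed.

Lemma locally_Rabs (x0 e : R) : 0 < e -> locally x0 (fun x => Rabs (x - x0) < e).
Proof.
  intros He. apply (filter_imp (ball x0 (mkposreal e He))); [|apply locally_ball].
  intros x Hx. now apply ball_Rabs.
Qed.

(* A power series that converges at x has radius of convergence >= |x|,
   because its terms at x are bounded. *)
Lemma pseries_radius_ge (a : nat -> R) (x l : R) :
  is_pseries a x l -> Rbar_le (Rabs x) (CV_radius a).
Proof.
  intros Hs. apply (proj1 (CV_radius_bounded a)).
  assert (Hlim : is_lim_seq (fun n => scal (pow_n x n) (a n)) 0).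
  { apply ex_series_lim_0. now exists l. }
  destruct (filterlim_bounded _ (ex_intro _ 0 Hlim)) as [M HM].
  exists M. intros n. specialize (HM n).
  change (Rabs (pow_n x n * a n) <= M) in HM.
  rewrite !pow_n_pow, !Rabs_mult in *. rewrite <- RPow_abs in HM.
  rewrite (Rabs_pos_eq (Rabs x ^ n)) by (apply pow_le, Rabs_pos). lra.
Qed.

(* Second-order Taylor bound for a real-analytic function: writing
   F (c + h) = a0 + a1 h + h^2 G h with G a power series (continuous, hence
   bounded by K near 0), the remainder is at most K (y - c)^2. *)
Lemma analytic_quadratic_remainder (F : R -> R) (c : R) : analytic_at F c ->
  exists a1 rho K, 0 < rho /\ 0 < K /\ forall y, Rabs (y - c) < rho ->
    Rabs (F y - F c - a1 * (y - c)) <= K * (y - c) ^ 2.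
Proof.
  intros [r [a [Hr Hser]]].
  set (rho := r / 4).
  assert (Hrad : Rbar_le (r / 2) (CV_radius a)).
  { assert (Hx : Rabs (c + r / 2 - c) < r) by (rewrite Rabs_pos_eq; lra).
    specialize (pseries_radius_ge _ _ _ (Hser _ Hx)).
    now rewrite Rabs_pos_eq by lra; replace (c + r / 2 - c) with (r / 2) by ring. }
  set (b := PS_decr_n a 2).
  assert (Hradb : CV_radius b = CV_radius a).
  { rewrite (CV_radius_ext b (PS_decr_1 (PS_decr_1 a))) by reflexivity.
    now rewrite !CV_radius_decr_1. }
  assert (Hin : forall h, Rabs h <= rho -> Rbar_lt (Rabs h) (CV_radius a)).
  { intros h Hh. eapply Rbar_lt_le_trans; [|exact Hrad]. simpl. unfold rho in Hh; lra. }
  destruct (bounded_continuity (PSeries b) (- rho) rho) as [M HM].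
  { intros h Hh. apply continuity_pt_filterlim, PSeries_continuity.
    rewrite Hradb. apply Hin. apply Rabs_le; lra. }
  change (forall h, - rho <= h <= rho -> Rabs (PSeries b h) < M) in HM.
  assert (Hexp : forall h, Rabs h < rho ->
            F (c + h) = a 0%nat + a 1%nat * h + h ^ 2 * PSeries b h).
  { intros h Hh.
    assert (Hh' : Rabs (c + h - c) < r) by (replace (c + h - c) with h by ring; unfold rho in Hh; lra).
    rewrite <- (is_pseries_unique _ _ _ (Hser _ Hh')).
    replace (c + h - c) with h by ring.
    rewrite (PSeries_decr_n a 1 h); [simpl; fold b; ring|].
    apply CV_radius_inside, Hin; lra. }
  assert (HM0 : 0 < M).
  { specialize (HM 0 ltac:(unfold rho; lra)). pose proof (Rabs_pos (PSeries b 0)). lra. }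
  exists (a 1%nat), rho, M. split; [unfold rho; lra|]. split; [exact HM0|].
  intros y Hy.
  assert (Ey := Hexp (y - c) Hy).
  assert (Ec := Hexp 0 ltac:(rewrite Rabs_R0; unfold rho; lra)).
  replace (c + (y - c)) with y in Ey by ring. rewrite Rplus_0_r in Ec.
  rewrite Ey, Ec.
  replace (a 0%nat + a 1%nat * (y - c) + (y - c) ^ 2 * PSeries b (y - c) -
    (a 0%nat + a 1%nat * 0 + 0 ^ 2 * PSeries b 0) - a 1%nat * (y - c))
    with ((y - c) ^ 2 * PSeries b (y - c)) by ring.
  rewrite Rabs_mult, (Rabs_pos_eq _ (pow2_ge_0 _)), Rmult_comm.
  apply Rmult_le_compat_r; [apply pow2_ge_0|].
  left. apply HM. apply Rabs_le_between. lra.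
Qed.

Definition approaches01 (Fl : (R -> Prop) -> Prop) (x0 : R) : Prop :=
  Filter Fl /\ filter_le Fl (locally x0) /\ Fl (fun x => 0 <= x <= 1 /\ x <> x0).

Lemma approaches01_near (Fl : (R -> Prop) -> Prop) (x0 d : R) :
  approaches01 Fl x0 -> 0 < d ->
  Fl (fun x => 0 <= x <= 1 /\ 0 < Rabs (x - x0) < d).
Proof.
  intros [HF [Hle Hdom]] Hd.
  apply (filter_imp (fun x => (0 <= x <= 1 /\ x <> x0) /\ Rabs (x - x0) < d)).
  - intros x [[Hx Hne] Hlt]. split; [exact Hx|]. split; [apply Rabs_pos_lt; lra | exact Hlt].
  - apply filter_and; [exact Hdom | apply Hle, locally_Rabs, Hd].
Qed.

Lemma Rpower_small (beta eps : R) : 0 < beta -> 0 < eps ->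
  exists d, 0 < d /\ forall t, 0 < t < d -> Rpower t beta < eps.
Proof.
  intros Hb He. exists (Rpower eps (/ beta)). split; [apply exp_pos|].
  intros t Ht. replace eps with (Rpower (Rpower eps (/ beta)) beta) at 1.
  - apply Rlt_Rpower_l; lra.
  - rewrite Rpower_mult, Rinv_l by lra. apply Rpower_1, He.
Qed.

Lemma holder_on01_pos (f : R -> R) (alpha : R) : holder_on01 f alpha ->
  exists C, 0 < C /\ forall x y, 0 <= x <= 1 -> 0 <= y <= 1 -> x <> y ->
    Rabs (f x - f y) <= C * Rpower (Rabs (x - y)) alpha.
Proof.
  intros [C HC]. exists (Rmax C 0 + 1). split; [pose proof (Rmax_r C 0); lra|].
  intros x y Hx Hy Hxy. eapply Rle_trans; [now apply HC|].
  apply Rmult_le_compat_r; [left; apply exp_pos|]. pose proof (Rmax_l C 0); lra.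
Qed.

Lemma holder_tends (f : R -> R) (alpha x0 : R) (Fl : (R -> Prop) -> Prop) :
  approaches01 Fl x0 -> 0 < alpha -> holder_on01 f alpha -> 0 <= x0 <= 1 ->
  filterlim f Fl (locally (f x0)).
Proof.
  intros HFl Hal Hh Hx0. pose proof (proj1 HFl) as HF.
  destruct (holder_on01_pos _ _ Hh) as [C [HC HCb]].
  apply filterlim_locally. intros eps.
  destruct (Rpower_small alpha (eps / C)) as [d [Hd Hsmall]];
    [exact Hal | apply Rdiv_lt_0_compat; [apply cond_pos | exact HC] |].
  eapply filter_imp; [|exact (approaches01_near Fl x0 d HFl Hd)].
  intros x [Hx Ht]. apply ball_Rabs.
  assert (Hne : x <> x0) by (intros ->; rewrite Rminus_eq_0, Rabs_R0 in Ht; lra).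
  eapply Rle_lt_trans; [exact (HCb x x0 Hx Hx0 Hne)|].
  specialize (Hsmall _ Ht).
  apply (Rmult_lt_compat_l C) in Hsmall; [|exact HC].
  replace (C * (eps / C)) with (pos eps) in Hsmall by (field; lra). exact Hsmall.
Qed.

Lemma diff_quot_superlinear (g : R -> R) (x0 M beta : R) (Fl : (R -> Prop) -> Prop) :
  approaches01 Fl x0 -> 1 < beta -> 0 < M ->
  Fl (fun x => Rabs (g x - g x0) <= M * Rpower (Rabs (x - x0)) beta) ->
  filterlim (diff_quot g x0) Fl (locally 0).
Proof.
  intros HFl Hb HM Hbound. pose proof (proj1 HFl) as HF.
  apply filterlim_locally. intros eps.
  destruct (Rpower_small (beta - 1) (eps / M)) as [d [Hd Hsmall]];
    [lra | apply Rdiv_lt_0_compat; [apply cond_pos | exact HM] |].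
  eapply filter_imp; [|exact (filter_and _ _ Hbound (approaches01_near Fl x0 d HFl Hd))].
  intros x [Hgx [_ Ht]]. apply ball_Rabs. unfold diff_quot.
  assert (Hne : x - x0 <> 0) by (intros E; rewrite E, Rabs_R0 in Ht; lra).
  set (t := Rabs (x - x0)) in *.
  assert (Hsplit : Rpower t beta = Rpower t (beta - 1) * t).
  { rewrite <- (Rpower_1 t) at 3 by lra. rewrite <- Rpower_plus. f_equal. ring. }
  specialize (Hsmall t Ht).
  apply (Rmult_lt_compat_l M) in Hsmall; [|exact HM].
  replace (M * (eps / M)) with (pos eps) in Hsmall by (field; lra).
  rewrite Rminus_0_r, Rabs_div by exact Hne. fold t.
  apply Rlt_div_l; [lra|].
  rewrite Hsplit in Hgx.
  apply Rle_lt_trans with (M * Rpower t (beta - 1) * t); [lra|].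
  apply Rmult_lt_compat_r; lra.
Qed.

Definition slope (F : R -> R) (y0 a1 y : R) : R :=
  if Req_EM_T y y0 then a1 else (F y - F y0) / (y - y0).

Lemma slope_tends (F : R -> R) (y0 a1 rho K : R) : 0 < rho -> 0 < K ->
  (forall y, Rabs (y - y0) < rho -> Rabs (F y - F y0 - a1 * (y - y0)) <= K * (y - y0) ^ 2) ->
  filterlim (slope F y0 a1) (locally y0) (locally a1).
Proof.
  intros Hrho HK Hquad. apply filterlim_locally. intros eps.
  assert (Hd : 0 < Rmin rho (eps / K)).
  { apply Rmin_glb_lt; [exact Hrho| apply Rdiv_lt_0_compat; [apply cond_pos| exact HK]]. }
  eapply filter_imp; [|exact (locally_Rabs y0 _ Hd)].
  intros y Hy. apply ball_Rabs. unfold slope.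
  destruct (Req_EM_T y y0) as [_|Hne]; [rewrite Rminus_eq_0, Rabs_R0; apply cond_pos|].
  assert (Hh : y - y0 <> 0) by lra.
  assert (Hpos : 0 < Rabs (y - y0)) by (apply Rabs_pos_lt, Hh).
  assert (Hrho' : Rabs (y - y0) < rho) by (eapply Rlt_le_trans; [exact Hy| apply Rmin_l]).
  assert (HepsK : K * Rabs (y - y0) < eps).
  { assert (Hy' : Rabs (y - y0) < eps / K) by (eapply Rlt_le_trans; [exact Hy| apply Rmin_r]).
    apply (Rmult_lt_compat_l K) in Hy'; [|exact HK].
    replace (K * (eps / K)) with (pos eps) in Hy' by (field; lra). exact Hy'. }
  replace ((F y - F y0) / (y - y0) - a1) with ((F y - F y0 - a1 * (y - y0)) / (y - y0)) by (field; exact Hh).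
  rewrite Rabs_div by exact Hh.
  apply Rlt_div_l; [exact Hpos|].
  specialize (Hquad y Hrho'). rewrite <- pow2_abs in Hquad. nra.
Qed.

(* Chain rule read backwards: if the slope of F at f x tends to a1 <> 0 and
   the difference quotient of F o f tends to l, then that of f tends to
   l / a1, since (F o f)-quotient = f-quotient * slope at f x. *)
Lemma derivative_transfer (F f : R -> R) (x0 a1 l : R) (Fl : (R -> Prop) -> Prop) :
  Filter Fl -> a1 <> 0 ->
  filterlim (fun x => slope F (f x0) a1 (f x)) Fl (locally a1) ->
  filterlim (diff_quot (fun x => F (f x)) x0) Fl (locally l) ->
  filterlim (diff_quot f x0) Fl (locally (l / a1)).
Proof.
  intros HF Ha1 Hslope Hcomp.
  assert (Hinv : filterlim (fun x => / slope F (f x0) a1 (f x)) Fl (locally (/ a1))).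
  { eapply filterlim_comp; [exact Hslope|].
    apply (filterlim_Rbar_inv (Finite a1)). intros E. apply Ha1. now injection E. }
  assert (Hprod : filterlim (fun x => diff_quot (fun x => F (f x)) x0 x * / slope F (f x0) a1 (f x))
                    Fl (locally (l / a1))).
  { eapply filterlim_comp_2; [exact Hcomp| exact Hinv|].
    exact (filterlim_Rbar_mult (Finite l) (Finite (/ a1)) (Finite (l / a1)) eq_refl). }
  assert (Hnz : Fl (fun x => slope F (f x0) a1 (f x) <> 0)).
  { apply filterlim_locally with (eps := mkposreal _ (Rabs_pos_lt _ Ha1)) in Hslope.
    eapply filter_imp; [|exact Hslope]. simpl.
    intros x Hx E. rewrite ball_Rabs, E, Rminus_0_l, Rabs_Ropp in Hx. lra. }
  eapply filterlim_ext_loc; [|exact Hprod].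
  eapply filter_imp; [|exact Hnz].
  unfold slope, diff_quot. intros x.
  destruct (Req_EM_T (f x) (f x0)) as [E|Hne]; intros Hs.
  - rewrite E, !Rminus_eq_0. unfold Rdiv. ring.
  - assert (Hx : x - x0 <> 0) by (intros E; apply Hne; replace x with x0 by lra; reflexivity).
    assert (HFne : F (f x) - F (f x0) <> 0) by (intros E; apply Hs; rewrite E; unfold Rdiv; ring).
    field. repeat split; lra.
Qed.

Lemma right_near_in01 (x0 : R) : 0 <= x0 < 1 ->
  locally x0 (fun x => x0 < x -> 0 <= x <= 1 /\ x <> x0).
Proof.
  intros Hx0. eapply filter_imp; [|exact (locally_Rabs x0 (1 - x0) ltac:(lra))].
  intros x Hx Hlt. apply Rabs_def2 in Hx. lra.
Qed.

Lemma left_near_in01 (x0 : R) : 0 < x0 <= 1 ->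
  locally x0 (fun x => x < x0 -> 0 <= x <= 1 /\ x <> x0).
Proof.
  intros Hx0. eapply filter_imp; [|exact (locally_Rabs x0 x0 ltac:(lra))].
  intros x Hx Hlt. apply Rabs_def2 in Hx. lra.
Qed.

Lemma within_le (D E : R -> Prop) (x0 : R) :
  locally x0 (fun x => E x -> D x) ->
  filter_le (within E (locally x0)) (within D (locally x0)).
Proof.
  intros HED P HP. unfold within in *.
  eapply filter_imp; [|exact (filter_and _ _ HED HP)].
  intros x [HEDx HPx] Hx. exact (HPx (HEDx Hx)).
Qed.

(* Restrictions of the neighbourhood filter to domains locally inside
   [0,1] \ {x0} approach x0 through [0,1] \ {x0}; this covers the punctured
   neighbourhood filter as well as [at_left] and [at_right]. *)
Lemma approaches01_within (D : R -> Prop) (x0 : R) :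
  locally x0 (fun x => D x -> 0 <= x <= 1 /\ x <> x0) ->
  approaches01 (within D (locally x0)) x0.
Proof.
  intros HD. split; [|split].
  - apply within_filter; apply locally_filter.
  - apply filter_le_within; apply locally_filter.
  - exact HD.
Qed.

Lemma deriv01_onesided (g : R -> R) (x0 l : R) : 0 <= x0 <= 1 ->
  has_deriv01 g x0 l -> has_finite_onesided_deriv01 g x0.
Proof.
  intros Hx0 Hd. exists l. destruct (Rlt_dec x0 1) as [Hlt|Hge].
  - left. split; [lra|]. eapply filterlim_filter_le_1; [|exact Hd].
    apply within_le, right_near_in01. lra.
  - right. split; [lra|]. eapply filterlim_filter_le_1; [|exact Hd].
    apply within_le, left_near_in01. lra.
Qed.

Lemma flat_composition_deriv0 (f F : R -> R) (alpha x0 rho K : R) (Fl : (R -> Prop) -> Prop) :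
  approaches01 Fl x0 -> 1 / 2 < alpha -> holder_on01 f alpha -> 0 <= x0 <= 1 ->
  0 < rho -> 0 < K ->
  (forall y, Rabs (y - f x0) < rho -> Rabs (F y - F (f x0)) <= K * (y - f x0) ^ 2) ->
  filterlim (diff_quot (fun x => F (f x)) x0) Fl (locally 0).
Proof.
  intros HFl Hal Hh Hx0 Hrho HK Hflat. pose proof (proj1 HFl) as HF.
  destruct (holder_on01_pos _ _ Hh) as [C [HC HCb]].
  assert (Hnear : Fl (fun x => Rabs (f x - f x0) < rho)).
  { assert (Hlim := holder_tends f alpha x0 Fl HFl ltac:(lra) Hh Hx0).
    rewrite filterlim_locally in Hlim. specialize (Hlim (mkposreal _ Hrho)).
    eapply filter_imp; [|exact Hlim]. intros x Hx. now rewrite ball_Rabs in Hx. }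
  apply (diff_quot_superlinear _ x0 (K * C ^ 2) (2 * alpha) Fl HFl);
    [lra | apply Rmult_lt_0_compat; [exact HK | apply pow_lt, HC] |].
  eapply filter_imp; [|exact (filter_and _ _ Hnear (proj2 (proj2 HFl)))].
  intros x [Hfx [Hx Hne]].
  set (u := Rpower (Rabs (x - x0)) alpha).
  assert (Hsq : Rpower (Rabs (x - x0)) (2 * alpha) = u ^ 2).
  { unfold u. replace (2 * alpha) with (alpha + alpha) by ring. rewrite Rpower_plus. ring. }
  assert (Hholder : (f x - f x0) ^ 2 <= (C * u) ^ 2).
  { rewrite <- pow2_abs. apply pow_incr. split; [apply Rabs_pos| exact (HCb x x0 Hx Hx0 Hne)]. }
  rewrite Hsq. eapply Rle_trans; [exact (Hflat _ Hfx)|].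
  replace (K * C ^ 2 * u ^ 2) with (K * (C * u) ^ 2) by ring.
  apply Rmult_le_compat_l; lra.
Qed.

Theorem mainTheorem9 (f F : R -> R) (alpha : R) (a b : R) :
  1/2 < alpha ->
  holder_on01 f alpha ->
  (forall x0 : R, 0 <= x0 <= 1 -> ~ has_finite_onesided_deriv01 f x0) ->
  (forall x : R, 0 <= x <= 1 -> a < f x < b) ->
  analytic_on_interval F a b ->
  forall x0 : R, 0 <= x0 <= 1 ->
    (has_finite_onesided_deriv01 (fun x => F (f x)) x0 <->
     has_deriv01 (fun x => F (f x)) x0 0).
Proof.
  intros Hal Hh Hnd Hab HF x0 Hx0.
  destruct (analytic_quadratic_remainder F (f x0) (HF _ (Hab _ Hx0)))
    as [a1 [rho [K [Hrho [HK Hquad]]]]].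
  split; [|apply deriv01_onesided, Hx0].
  intros [l Hl]. destruct (Req_dec a1 0) as [Ha1|Ha1].
  -
    assert (Hflat : forall y, Rabs (y - f x0) < rho ->
              Rabs (F y - F (f x0)) <= K * (y - f x0) ^ 2).
    { intros y Hy. specialize (Hquad y Hy). now rewrite Ha1, Rmult_0_l, Rminus_0_r in Hquad. }
    assert (Hpunct : approaches01 (within (fun x => 0 <= x <= 1 /\ x <> x0) (locally x0)) x0).
    { apply approaches01_within, filter_forall. tauto. }
    exact (flat_composition_deriv0 f F alpha x0 rho K _ Hpunct Hal Hh Hx0 Hrho HK Hflat).
  - (* a1 <> 0: a one-sided derivative of F o f would transfer to f *)
    exfalso. apply (Hnd x0 Hx0). exists (l / a1).
    assert (Htransfer : forall Fl, approaches01 Fl x0 ->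
              filterlim (diff_quot (fun x => F (f x)) x0) Fl (locally l) ->
              filterlim (diff_quot f x0) Fl (locally (l / a1))).
    { intros Fl HFl. apply derivative_transfer; [exact (proj1 HFl)| exact Ha1|].
      eapply filterlim_comp; [exact (holder_tends f alpha x0 Fl HFl ltac:(lra) Hh Hx0)|].
      exact (slope_tends F (f x0) a1 rho K Hrho HK Hquad). }
    destruct Hl as [[Hx0r Hl]|[Hx0l Hl]]; [left|right]; split; auto.
    + apply Htransfer; [apply approaches01_within, right_near_in01|]; auto.
    + apply Htransfer; [apply approaches01_within, left_near_in01|]; auto.
Qed.
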